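(* Fix $0<q<1$ and $t\in\mathbb R$. The collection of distributions $G\in\mathcal G$ satisfying $T_q(G)=t$ is convex, and the collection of distributions $G\in\mathcal G$ satisfying $T_q(G)\ge t$ is convex.
   Context: $E(t)=1-e^{-t}$, $\bar E=1-E$, $\bar G=1-G$. $\mathcal G=\{E\#F:F$ a probability distribution on $[1,\infty)\}$ with $(E\#F)(t)=\int E(t/\mu)\,dF(\mu)$. FDR functional $T_q(G)=\inf\{t:\bar G(t)\ge\frac1q\bar E(t)\}$ (with $\inf\emptyset=+\infty$). *)

From HB Require Import structures.
From mathcomp Require Import all_boot all_order all_algebra.
From mathcomp Require Import all_classical all_reals all_analysis.
Set Implicit Arguments. Unset Strict Implicit. Unset Printing Implicit Defensive.
Import Order.TTheory GRing.Theory Num.Theory.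
Import numFieldNormedType.Exports.
Local Open Scope classical_set_scope.
Local Open Scope ring_scope.

Definition Eexp {R : realType} (t : R) : R := 1 - expR (- t).

Definition mixE {R : realType} (F : probability R R) (t : R) : R :=
  Rintegral F `[1, +oo[%classic (fun mu => Eexp (t / mu)).

Definition inGclass {R : realType} (G : R -> R) : Prop :=
  exists F : probability R R, F `[1, +oo[%classic = 1%E /\ G = mixE F.

(* T_q(G) = inf { t : 1 - G t >= (1/q) (1 - E t) }, inf of empty set = +oo *)
Definition Tq {R : realType} (q : R) (G : R -> R) : \bar R :=
  ereal_inf [set t%:E | t in [set t : R | (1 - Eexp t) / q <= 1 - G t]].

Definition convex_collection {R : realType} (S : set (R -> R)) : Prop :=
  forall G1 G2 (l : R), S G1 -> S G2 -> 0 <= l <= 1 ->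
    S (fun t => l * G1 t + (1 - l) * G2 t).

(* Every G = E # F is a scale mixture of exponentials, so mixing the mixing
   measures shows that the class is convex.  For such G the survival ratio
   (1 - G t) / (1 - E t) = \int e^t e^(-t/mu) dF(mu) is nondecreasing in t
   because mu >= 1; hence the region {t | (1 - E t) / q <= 1 - G t}, whose
   infimum is T_q(G), is upward closed.  The region of a convex combination of
   G1 and G2 contains the intersection of their regions and is contained in
   their union, so its T_q lies between the minimum and the maximum of
   T_q(G1) and T_q(G2). *)

From HB Require Import structures.
From mathcomp Require Import all_boot all_order all_algebra.
From mathcomp Require Import all_classical all_reals all_analysis.
From mathcomp Require Import lra measurable_realfun.
Import Order.TTheory GRing.Theory Num.Theory.
Import numFieldNormedType.Exports.
Local Open Scope classical_set_scope.
Local Open Scope ring_scope.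

Section convex_combination.
Context {R : realFieldType}.
Implicit Types l a b : R.

Lemma ge_min_conv l a b : 0 <= l <= 1 -> Num.min a b <= l * a + (1 - l) * b.
Proof.
move=> /andP[l0 l1]; set m := Num.min a b.
have l1' : 0 <= 1 - l by rewrite subr_ge0.
have /(ler_wpM2l l0) ma : m <= a by rewrite ge_min lexx.
have /(ler_wpM2l l1') mb : m <= b by rewrite ge_min lexx orbT.
lra.
Qed.

Lemma le_max_conv l a b : 0 <= l <= 1 -> l * a + (1 - l) * b <= Num.max a b.
Proof.
move=> /andP[l0 l1]; set m := Num.max a b.
have l1' : 0 <= 1 - l by rewrite subr_ge0.
have /(ler_wpM2l l0) am : a <= m by rewrite le_max lexx.
have /(ler_wpM2l l1') bm : b <= m by rewrite le_max lexx orbT.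
lra.
Qed.

End convex_combination.

Lemma upclosed_gt_ereal_inf (R : realType) (A : set R) x :
  (forall y z, y <= z -> A y -> A z) -> (ereal_inf (EFin @` A) < x%:E)%E -> A x.
Proof.
move=> upA /ereal_inf_lt[_ [y Ay <-]]; rewrite lte_fin => /ltW yx.
exact: upA yx Ay.
Qed.

Section probability_convex_combination.
Context {d} {T : measurableType d} {R : realType}.
Variables (P1 P2 : probability T R) (l : R).
Hypotheses (l0 : 0 <= l) (l1 : l <= 1).

Let l' : {nonneg R} := NngNum l0.
Let onem_l_ge0 : 0 <= 1 - l. Proof. by rewrite subr_ge0. Qed.
Let onem_l' : {nonneg R} := NngNum onem_l_ge0.

Definition prob_conv := measure_add (mscale l' P1) (mscale onem_l' P2).

Lemma prob_convE A : prob_conv A = (l%:E * P1 A + (1 - l)%:E * P2 A)%E.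
Proof. exact: measure_addE. Qed.

Lemma prob_conv_eq1 A : P1 A = 1%E -> P2 A = 1%E -> prob_conv A = 1%E.
Proof. by move=> P1A P2A; rewrite prob_convE P1A P2A !mule1 -EFinD addrC subrK. Qed.

Let prob_conv_setT : prob_conv [set: T] = 1%E.
Proof. exact: prob_conv_eq1 (probability_setT P1) (probability_setT P2). Qed.

HB.instance Definition _ :=
  Measure.copy prob_conv (measure_add (mscale l' P1) (mscale onem_l' P2)).
HB.instance Definition _ := Measure_isProbability.Build _ _ _ prob_conv prob_conv_setT.

Lemma Rintegral_prob_conv (D : set T) (f : T -> R) : measurable D ->
    measurable_fun D f -> (forall x, D x -> 0 <= f x) ->
    P1.-integrable D (EFin \o f) -> P2.-integrable D (EFin \o f) ->
  \int[prob_conv]_(x in D) f x =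
    l * \int[P1]_(x in D) f x + (1 - l) * \int[P2]_(x in D) f x.
Proof.
move=> mD /measurable_EFinP mf f0 if1 if2.
have f0E x : D x -> (0 <= (f x)%:E)%E by move=> /f0; rewrite lee_fin.
rewrite /Rintegral ge0_integral_measure_add // !ge0_integral_mscale //=.
rewrite -(fineK (integrable_fin_num mD if1)) -(fineK (integrable_fin_num mD if2)).
by rewrite -!EFinM -EFinD.
Qed.

End probability_convex_combination.

Section exponential_mixtures.
Context {R : realType}.
Local Notation D := (`[1, +oo[%classic : set R).
Implicit Types (F : probability R R) (t mu : R).

Lemma measurable_expR_div t : measurable_fun D (fun mu => expR (- (t / mu))).
Proof.
have pos_cont : {in (`]0, +oo[%classic : set R),
    continuous (fun mu => expR (- (t / mu)))}.
  move=> mu; rewrite inE /= in_itv /= andbT => mu0.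
  apply: (@continuous_comp _ _ _ (fun mu => - (t / mu)) expR); last first.
    exact: continuous_expR.
  apply: cvgN.
  by apply: cvgM; [exact: cvg_cst | apply: inv_continuous; rewrite gt_eqF].
apply: measurable_funS (open_continuous_measurable_fun _ pos_cont).
- exact: measurable_itv.
- by move=> mu /=; rewrite !in_itv /= !andbT; apply: lt_le_trans.
- exact: interval_open.
Qed.

Lemma expR_div_le t mu : 1 <= mu -> expR (- (t / mu)) <= expR `|t|.
Proof.
move=> mu1; rewrite ler_expR.
have mu0 : 0 < mu by apply: lt_le_trans mu1.
apply: le_trans (ler_norm _) _; rewrite normrN normrM normfV (gtr0_norm mu0).
by rewrite ler_pdivrMr // ler_peMr.
Qed.

Lemma integrable_expR_div F t : F.-integrable D (EFin \o fun mu => expR (- (t / mu))).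
Proof.
apply: measurable_bounded_integrable.
- exact: measurable_itv.
- by rewrite (le_lt_trans (probability_le1 _ _)) ?ltry //; exact: measurable_itv.
- exact: measurable_expR_div.
exists (expR `|t|); split; first exact: num_real.
move=> M /ltW ltM mu; rewrite /= in_itv /= andbT => mu1.
by rewrite ger0_norm ?expR_ge0 // (le_trans (expR_div_le t _ mu1) ltM).
Qed.

Lemma oneBEexp t : 1 - Eexp t = expR (- t).
Proof. by rewrite /Eexp opprB addrC subrK. Qed.

Lemma oneBmixE F t : F D = 1%E ->
  1 - mixE F t = \int[F]_(mu in D) expR (- (t / mu)).
Proof.
move=> FD; have mD : measurable D by exact: measurable_itv.
rewrite /mixE (eq_Rintegral _ (g := fun mu => 1 - expR (- (t / mu)))); last first.
  by move=> mu _; rewrite /Eexp.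
rewrite RintegralB //; last 2 first.
- exact: finite_measure_integrable_cst.
- exact: integrable_expR_div.
rewrite Rintegral_cst // [fine _](_ : _ = 1); last exact: (f_equal fine FD).
by rewrite mul1r opprB addrC subrK.
Qed.

Lemma mixE_survival_ratioE F t : F D = 1%E ->
  (1 - mixE F t) / (1 - Eexp t) = \int[F]_(mu in D) (expR t * expR (- (t / mu))).
Proof.
move=> FD; rewrite oneBmixE // oneBEexp expRN invrK mulrC -RintegralZl //.
exact: integrable_expR_div.
Qed.

Lemma nondecreasing_mixE_survival_ratio F : F D = 1%E ->
  {homo (fun t => (1 - mixE F t) / (1 - Eexp t)) : x y / x <= y}.
Proof.
move=> FD x y xy; rewrite /= !mixE_survival_ratioE //.
have mD : measurable D by exact: measurable_itv.
apply: le_Rintegral => //; try exact: integrableZl (integrable_expR_div _ _).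
move=> mu; rewrite /= in_itv /= andbT => mu1; rewrite -!expRD ler_expR.
have mu0 : 0 < mu by apply: lt_le_trans mu1.
rewrite -[X in X - _]mulr1 -[X in _ <= X - _]mulr1 -!mulrBr.
by rewrite (mulrC x) (mulrC y) ler_wpM2l // subr_ge0 invr_le1 // unitfE gt_eqF.
Qed.

Lemma mixE_prob_conv F1 F2 l (l0 : 0 <= l) (l1 : l <= 1) t :
    F1 D = 1%E -> F2 D = 1%E ->
  mixE (prob_conv F1 F2 l l0 l1) t = l * mixE F1 t + (1 - l) * mixE F2 t.
Proof.
move=> F1D F2D.
have : 1 - mixE (prob_conv F1 F2 l l0 l1) t =
    l * (1 - mixE F1 t) + (1 - l) * (1 - mixE F2 t).
  rewrite !oneBmixE //; last exact: prob_conv_eq1.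
  apply: Rintegral_prob_conv.
  - exact: measurable_itv.
  - exact: measurable_expR_div.
  - by move=> mu _; rewrite expR_ge0.
  - exact: integrable_expR_div.
  - exact: integrable_expR_div.
lra.
Qed.

Lemma inGclass_convex : convex_collection (@inGclass R).
Proof.
move=> _ _ l [F1 [F1D ->]] [F2 [F2D ->]] /andP[l0 l1].
exists (prob_conv F1 F2 l l0 l1); split; first exact: prob_conv_eq1.
by apply/funext => t; rewrite mixE_prob_conv.
Qed.

End exponential_mixtures.

Section fdr_functional.
Context {R : realType} (q : R).
Implicit Types (G : R -> R) (l t : R).

Definition fdr_region G : set R := [set t | (1 - Eexp t) / q <= 1 - G t].

Lemma fdr_region_conv_cap {l G1 G2} : 0 <= l <= 1 ->
  fdr_region G1 `&` fdr_region G2 `<=`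
  fdr_region (fun t => l * G1 t + (1 - l) * G2 t).
Proof.
move=> l01 t [t1 t2]; rewrite /fdr_region /=.
have : (1 - Eexp t) / q <= Num.min (1 - G1 t) (1 - G2 t) by rewrite le_min t1.
have := ge_min_conv l (1 - G1 t) (1 - G2 t) l01; lra.
Qed.

Lemma fdr_region_conv_cup {l G1 G2} : 0 <= l <= 1 ->
  fdr_region (fun t => l * G1 t + (1 - l) * G2 t) `<=`
  fdr_region G1 `|` fdr_region G2.
Proof.
move=> l01 t; rewrite /fdr_region /= => tl.
have : (1 - Eexp t) / q <= Num.max (1 - G1 t) (1 - G2 t).
  apply: le_trans tl _; have := le_max_conv l (1 - G1 t) (1 - G2 t) l01; lra.
by rewrite le_max => /orP.
Qed.

Lemma fdr_region_upclosed G : inGclass G ->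
  forall x y, x <= y -> fdr_region G x -> fdr_region G y.
Proof.
move=> [F [FD ->]] x y xy; rewrite /fdr_region /= !(mulrC _ q^-1).
have Epos z : 0 < 1 - Eexp z by rewrite oneBEexp expR_gt0.
rewrite -!ler_pdivlMr ?Epos // => /le_trans; apply.
exact: nondecreasing_mixE_survival_ratio.
Qed.

Lemma Tq_conv_ge l G1 G2 t : 0 <= l <= 1 ->
    (t%:E <= Tq q G1)%E -> (t%:E <= Tq q G2)%E ->
  (t%:E <= Tq q (fun s => (l * G1 s + (1 - l) * G2 s)%R))%E.
Proof.
move=> l01 tG1 tG2; apply/ereal_infP => _ [x /(fdr_region_conv_cup l01) + <-].
by case=> [xG1|xG2]; [apply: le_trans tG1 _ | apply: le_trans tG2 _];
  apply: ereal_inf_lbound; exists x.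
Qed.

Lemma Tq_conv_le l G1 G2 t : 0 <= l <= 1 -> inGclass G1 -> inGclass G2 ->
    (Tq q G1 <= t%:E)%E -> (Tq q G2 <= t%:E)%E ->
  (Tq q (fun s => (l * G1 s + (1 - l) * G2 s)%R) <= t%:E)%E.
Proof.
move=> l01 G1G G2G G1t G2t; apply/lee_addgt0Pr => e e0.
have region_above_t G : inGclass G -> (Tq q G <= t%:E)%E -> fdr_region G (t + e).
  move=> GG Gt; apply: upclosed_gt_ereal_inf; first exact: fdr_region_upclosed.
  by apply: le_lt_trans Gt _; rewrite lte_fin ltrDl.
apply: ereal_inf_lbound; exists (t + e) => //.
by apply: fdr_region_conv_cap => //; split; apply: region_above_t.
Qed.

End fdr_functional.

Theorem lemma4p2 (R : realType) (q t : R) (hq0 : 0 < q) (hq1 : q < 1) :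
  convex_collection [set G : R -> R | inGclass G /\ Tq q G = t%:E] /\
  convex_collection [set G : R -> R | inGclass G /\ (t%:E <= Tq q G)%E].
Proof.
split=> G1 G2 l [G1G T1] [G2G T2] l01; split; try exact: inGclass_convex.
- apply/le_anti/andP; split.
  + by apply: Tq_conv_le; rewrite ?T1 ?T2.
  + by apply: Tq_conv_ge; rewrite ?T1 ?T2.
- exact: Tq_conv_ge.
Qed.
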